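(* Let $P(x)\in\mathbb{Z}[x]$ have degree $d\ge2$ and at least two distinct complex roots. Let $a,b$ be distinct positive integers. Then the polynomial $a\,P(y)-b\,P(x)\in\mathbb{C}[x,y]$ has no factor in $\mathbb{C}[x,y]$ of degree $1$. *)

From mathcomp Require Import all_boot all_algebra.
From mathcomp Require Export mpoly.
From mathcomp.real_closed Require Export complex.
From mathcomp Require Export Rstruct.
Import GRing.Theory.
Local Open Scope ring_scope.

Definition CC : numClosedFieldType := complex Rdefinitions.R.

Definition polyCC (P : {poly int}) : {poly CC} := map_poly (fun z : int => z%:~R) P.

(* P(X_i) in C[x,y] = C[X_0, X_1]; x := 'X_0, y := 'X_1 *)
Definition evalX (P : {poly int}) (i : 'I_2) : {mpoly CC[2]} :=
  (map_poly (fun z : int => (z%:~R : CC)%:MP_[2]) P).['X_i].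

Definition abPoly (a b : nat) (P : {poly int}) : {mpoly CC[2]} :=
  a%:R * evalX P 1 - b%:R * evalX P 0.

(* A linear factor of a P(y) - b P(x) cuts out a line on which a P(y) = b P(x).
   A horizontal or vertical line would make P constant, so the line is
   y = m x + c with m <> 0, and a P(m x + c) = b P(x) identically.  Comparing
   leading coefficients gives a m^d = b, so m is not a root of unity because
   a <> b.  The roots of P are then stable under x |-> m x + c; the orbit of
   any root other than the fixed point c / (1 - m) is infinite, so P would
   have a single root. *)

From mathcomp Require Import all_boot all_algebra.
From mathcomp Require Import ring.
Set Implicit Arguments.
Unset Strict Implicit.
Unset Printing Implicit Defensive.

Import GRing.Theory Num.Theory.
Local Open Scope ring_scope.

Lemma poly_horner_inj (R : numDomainType) (p q : {poly R}) :
  (forall x, p.[x] = q.[x]) -> p = q.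
Proof.
move=> Epq; apply/eqP; rewrite -subr_eq0; apply/eqP.
apply: (@roots_geq_poly_eq0 _ _ (mkseq (fun n => n%:R) (size (p - q)))).
- by apply/allP => x _; rewrite /root !hornerE Epq subrr.
- by apply: mkseq_uniq => i j /eqP; rewrite eqr_nat => /eqP.
- by rewrite size_mkseq.
Qed.

Lemma size_poly_le1_horner_const (R : numDomainType) (p : {poly R}) (k c : R) :
  k != 0 -> (forall x, k * p.[x] = c) -> (size p <= 1)%N.
Proof.
move=> k0 Ep.
have Ekp : k *: p = c%:P by apply: poly_horner_inj => x; rewrite !hornerE.
by rewrite -(size_scale p k0) Ekp size_polyC_leq1.
Qed.

Lemma lead_coef_comp_affine (R : idomainType) (p : {poly R}) (m c : R) :
  m != 0 -> lead_coef (p \Po (m%:P * 'X + c%:P)) = lead_coef p * m ^+ (size p).-1.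
Proof.
move=> m0; have sq : size (m%:P * 'X + c%:P) = 2%N.
  by rewrite size_MXaddC polyC_eq0 (negPf m0) size_polyC m0.
by rewrite lead_coef_comp ?sq // /lead_coef sq coefD coefMX !coefC /= addr0.
Qed.

Lemma natr_ratio_not_unity (R : numDomainType) (a b d : nat) (m : R) :
  a != b -> a%:R * m ^+ d = b%:R -> forall k, (0 < k)%N -> m ^+ k != 1.
Proof.
move=> ab Em k k0; apply/eqP => mk1; move/negP: ab; apply.
have /eqP : (a%:R * m ^+ d) ^+ k = b%:R ^+ k :> R by rewrite Em.
rewrite exprMn -exprM mulnC exprM mk1 expr1n mulr1 -!natrX eqr_nat.
by rewrite eqn_exp2r.
Qed.

Lemma expr_inj_not_unity (R : idomainType) (m : R) :
  m != 0 -> (forall k, (0 < k)%N -> m ^+ k != 1) -> injective (fun n => m ^+ n).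
Proof.
move=> m0 m_unity.
suff lt_neq i j : (i < j)%N -> m ^+ i != m ^+ j.
  move=> i j /= Eij; apply/eqP.
  by case: ltngtP => // [/lt_neq | /lt_neq]; rewrite Eij eqxx.
move=> ij; have ji0 : (0 < j - i)%N by rewrite subn_gt0.
apply: contraNneq (m_unity _ ji0) => Eij.
have mi0 : m ^+ i != 0 by rewrite expf_neq0.
by apply/eqP/(mulfI mi0); rewrite -exprD subnKC ?(ltnW ij) // mulr1 Eij.
Qed.

Lemma root_affine_stable_fixpoint (F : fieldType) (q : {poly F}) (m c r : F) :
  q != 0 -> m != 0 -> (forall k, (0 < k)%N -> m ^+ k != 1) ->
  (forall x, root q x -> root q (m * x + c)) -> root q r -> r = c / (1 - m).
Proof.
move=> q0 m0 m_unity q_stable qr; set p := c / (1 - m).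
have m1 : 1 - m != 0 by rewrite subr_eq0 eq_sym -(expr1 m) m_unity.
have root_orbit n : root q (p + m ^+ n * (r - p)).
  elim: n => [|n IHn]; first by rewrite expr0 mul1r addrC subrK.
  have -> : p + m ^+ n.+1 * (r - p) = m * (p + m ^+ n * (r - p)) + c.
    by rewrite /p exprS; field.
  exact: q_stable.
apply/eqP; rewrite -subr_eq0; apply/negPn/negP => rp0.
set orbit := mkseq (fun n => p + m ^+ n * (r - p)) (size q).
have orbit_roots : all (root q) orbit by apply/allP => x /mapP [n _ ->]; apply: root_orbit.
have orbit_uniq : uniq orbit.
  apply: mkseq_uniq => i j /addrI /(mulIf rp0).
  exact: expr_inj_not_unity.
by have := max_poly_roots q0 orbit_roots orbit_uniq; rewrite size_mkseq ltnn.
Qed.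

Lemma no_affine_horner_relation (F : numFieldType) (p : {poly F}) (a b : nat) (m c : F) :
  (1 < size p)%N -> (exists z1 z2, [/\ z1 != z2, root p z1 & root p z2]) ->
  (0 < a)%N -> (0 < b)%N -> a != b ->
  ~ (forall x, a%:R * p.[m * x + c] = b%:R * p.[x]).
Proof.
move=> sp [z1 [z2 [z12 pz1 pz2]]] a0 b0 ab Ep.
have a0' : a%:R != 0 :> F by rewrite pnatr_eq0 -lt0n.
have b0' : b%:R != 0 :> F by rewrite pnatr_eq0 -lt0n.
have p0 : p != 0 by rewrite -size_poly_gt0 ltnW.
have [m0|m0] := eqVneq m 0.
  suff: (size p <= 1)%N by rewrite leqNgt sp.
  by apply: (size_poly_le1_horner_const b0') => x; rewrite -Ep m0 mul0r add0r.
have Epoly : a%:R *: (p \Po (m%:P * 'X + c%:P)) = b%:R *: p.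
  by apply: poly_horner_inj => x; rewrite !hornerZ horner_comp hornerMXaddC hornerC Ep.
have Elead : a%:R * m ^+ (size p).-1 = b%:R.
  have lp0 : lead_coef p != 0 by rewrite lead_coef_eq0.
  apply: (mulfI lp0); rewrite mulrCA -(lead_coef_comp_affine _ c m0) -lead_coefZ Epoly.
  by rewrite lead_coefZ mulrC.
have p_stable x : root p x -> root p (m * x + c).
  move=> /eqP px0; apply/eqP; have /eqP := Ep x.
  by rewrite px0 mulr0 mulf_eq0 (negPf a0') => /eqP.
have fixed := root_affine_stable_fixpoint p0 m0 (natr_ratio_not_unity ab Elead) p_stable.
by move: z12; rewrite (fixed _ pz1) (fixed _ pz2) eqxx.
Qed.

Lemma msize2_linearE (R : ringType) (L : {mpoly R[2]}) : msize L = 2%N ->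
  L = (L@_0%MM)%:MP + L@_U_(0) *: 'X_0 + L@_U_(1) *: 'X_1.
Proof.
move=> sL; apply/mpolyP => m.
rewrite !mcoeffD mcoeffC !mcoeffZ !mcoeffX.
have U10 : (U_(1%R) == U_(0%R) :> 'X_{1..2})%MM = false.
  by apply/eqP => /(congr1 (fun m : 'X_{1..2} => m 1%R)); rewrite !mnm1E.
have [->|m0] := eqVneq m 0%MM; first by rewrite !mnm1_eq0 !mulr0 mulr1 !addr0.
have [->|m1] := eqVneq m U_(0%R)%MM; first by rewrite U10 !mulr0 mulr1 add0r addr0.
have [->|m2] := eqVneq m U_(1%R)%MM; first by rewrite !mulr0 mulr1 !add0r.
rewrite !mulr0 !add0r; apply/eqP; rewrite mcoeff_eq0; apply/negP => /msize_mdeg_lt.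
rewrite sL ltnS leq_eqVlt ltnS leqn0 mdeg_eq0 (negPf m0) orbF.
case/mdeg1P => -[[|[|i]] Hi] // /eqP Em.
- by move: m1; rewrite Em (_ : Ordinal Hi = 0%R) ?eqxx //; apply/val_inj.
- by move: m2; rewrite Em (_ : Ordinal Hi = 1%R) ?eqxx //; apply/val_inj.
Qed.

Lemma meval_evalX (P : {poly int}) (i : 'I_2) (v : 'I_2 -> CC) :
  meval v (evalX P i) = (polyCC P).[v i].
Proof.
rewrite /evalX -horner_map /= mevalXU -map_poly_comp.
by congr (_ .[_]); apply: eq_map_poly => z /=; rewrite mevalC.
Qed.

Lemma meval_abPoly (a b : nat) (P : {poly int}) (v : 'I_2 -> CC) :
  meval v (abPoly a b P) = a%:R * (polyCC P).[v 1] - b%:R * (polyCC P).[v 0].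
Proof. by rewrite /abPoly mevalB !mevalM !meval_evalX !rmorph_nat. Qed.

Lemma abPoly_linear_factor_zero (a b : nat) (P : {poly int}) (Q : {mpoly CC[2]})
    (g al be x y : CC) :
  abPoly a b P = (g%:MP + al *: 'X_0 + be *: 'X_1) * Q -> g + al * x + be * y = 0 ->
  a%:R * (polyCC P).[y] = b%:R * (polyCC P).[x].
Proof.
move=> EabP Lxy; apply/eqP; rewrite -subr_eq0.
pose v (i : 'I_2) := if val i == 0%N then x else y.
have := congr1 (meval v) EabP; rewrite meval_abPoly mevalM => ->.
by rewrite !mevalD mevalC !mevalZ !mevalXU Lxy mul0r.
Qed.

Theorem mainTheorem4 (P : {poly int}) (a b : nat) :
  (2 < size P)%N ->
  (exists z1 z2 : CC, [/\ z1 != z2, root (polyCC P) z1 & root (polyCC P) z2]) ->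
  (0 < a)%N -> (0 < b)%N -> a != b ->
  ~ (exists L Q : {mpoly CC[2]}, msize L = 2%N /\ abPoly a b P = L * Q).
Proof.
move=> sP roots a0 b0 ab [L [Q [sL EabP]]].
have sPC : (1 < size (polyCC P))%N.
  by rewrite size_map_inj_poly ?mulr0z ?(ltnW sP) //; apply: intr_inj.
set g := L@_0%MM; set al := L@_U_(0); set be := L@_U_(1).
have EL := msize2_linearE sL; rewrite EL -/g -/al -/be in EabP.
have zero_set := abPoly_linear_factor_zero EabP.
have [be0|be0] := eqVneq be 0.
  have al0 : al != 0.
    apply/eqP => al0; move: sL.
    by rewrite EL -/g -/al -/be al0 be0 !scale0r !addr0 msizeC; case: (g != 0).
  have a0' : a%:R != 0 :> CC by rewrite pnatr_eq0 -lt0n.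
  suff: (size (polyCC P) <= 1)%N by rewrite leqNgt sPC.
  apply: (size_poly_le1_horner_const a0') => y.
  by apply: (zero_set (- g / al)); rewrite be0; field.
apply: (no_affine_horner_relation (m := - al / be) (c := - g / be) sPC roots a0 b0 ab).
by move=> x; apply: zero_set; field.
Qed.
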